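(* Let $G\le\mathrm{Aut}(\mathcal{T}_d)$ be self-similar. Then $\kappa_k^n(S_n\wr G)\subseteq S_{n+d-1}\wr G$ for all $1\le k\le n$, so the classes $[T_-,g,T_+]$ with $g\in S_n\wr G$ form a subgroup $\mathscr{T}(S_*\wr G)$ of $\mathscr{T}(S_*\wr\mathrm{Aut}(\mathcal{T}_d))$, and the map $[T_-,g,T_+]\mapsto((T_-,g,T_+))$ restricts to an isomorphism $\mathscr{T}(S_*\wr G)\cong V_d(G)$.
   Context: Notation for trees, wreath products, wreath recursion, almost-automorphisms $((T_-,\sigma(f_1,\dots,f_n),T_+))$, $\mathrm{AAut}(\mathcal{T}_d)$, the cloning maps $\kappa_k^n$ and the construction $\mathscr{T}(S_*\wr G)$: Fix $d\ge2$, $X=\{1,\dots,d\}$, $\mathcal{T}_d$ the rooted $d$-ary tree on $X^*$. $S_n\wr G=S_n\ltimes G^n$ with $\sigma(f_1,\dots,f_n)\tau(g_1,\dots,g_n)=\sigma\tau(f_{\tau(1)}g_1,\dots,f_{\tau(n)}g_n)$ (permutations act on the left). Each $f\in\mathrm{Aut}(\mathcal{T}_d)$ has wreath recursion $f=\rho(f)(f_1,\dots,f_d)$ with $f(xw)=\rho(f)(x)f_x(w)$; $G$ is self-similar if all $f_x$ lie in $G$ for all $f\in G$, $x\in X$. For finite rooted complete subtrees $T_\pm$ with $n$ leaves ($u_i$ leaves of $T_-$, $v_i$ of $T_+$, ordered left to right), $((T_-,\sigma(f_1,\dots,f_n),T_+))$ is the homeomorphism of $\partial\mathcal{T}_d$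 with $v_iw\mapsto u_{\sigma(i)}f_i(w)$. $V_d(G)$ is the subgroup of $\mathrm{AAut}(\mathcal{T}_d)$ of all such homeomorphisms with all $f_i\in G$. The cloning map is $(\sigma(f_1,\dots,f_n))\kappa_k^n=(\sigma)\varsigma_k^n\rho(f_k)^{(k)}(f_1,\dots,f_{k-1},f_k^1,\dots,f_k^d,f_{k+1},\dots,f_n)$ where $f_k=\rho(f_k)(f_k^1,\dots,f_k^d)$, $\tau^{(k)}\in S_{n+d-1}$ acts as $k+j-1\mapsto k+\tau(j)-1$ on $\{k,\dots,k+d-1\}$ and trivially elsewhere, and $(\sigma)\varsigma_k^n\in S_{n+d-1}$ is the permutation obtained from $\sigma$ by replacing the point $k$ of the domain by the block $k,\dots,k+d-1$ and the point $\sigma(k)$ of the range by the block $\sigma(k),\dots,\sigma(k)+d-1$, mapping the block order-preservingly ($k+j\mapsto\sigma(k)+j$) and shifting other points to preserve their relative order. $\mathscr{T}(S_*\wr G)$ is the set of triples $(T_-,g,T_+)$ ($T_\pm$ with $n$ leaves, $g\in S_n\wr G$) modulo the equivalence generated by expansions $(T_-,g,T_+)\to(T_-',(g)\kappa_k^n,T_+')$ ($T_+'$: $d$-caret added at $k$th leaf of $T_+$; $T_-'$: $d$-caret added at $\rho_n(g)(k)$th leaf of $T_-$, where $\rho_n(\sigma(\vec g))=\sigma$), with product $[T_-,f,T_+][T_+,g,U_+]=[T_-,fg,U_+]$. *)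

From HB Require Import structures.
From mathcomp Require Import all_boot.
From Stdlib Require Import Relations.
Set Implicit Arguments. Unset Strict Implicit. Unset Printing Implicit Defensive.

(* Alphabet X = 'I_d (letters 0..d-1 stand for 1..d); vertices of T_d are  *)
(* words seq 'I_d; the boundary is nat -> 'I_d.                            *)

(* candidate tree maps; Aut(T_d) = those satisfying is_aut *)
Definition aut (d : nat) := seq 'I_d -> seq 'I_d.

Definition is_aut d (f : aut d) : Prop :=
  [/\ (forall w, size (f w) = size w),
      (forall w x, take (size w) (f (rcons w x)) = f w)
    & bijective f].

(* wreath recursion f = rho(f)(f_1,...,f_d):  f (x :: w) = rho f x :: f_x w *)
Definition rho d (f : aut d) (x : 'I_d) : 'I_d := head x (f [:: x]).
Definition section d (f : aut d) (x : 'I_d) : aut d := fun w => behead (f (x :: w)).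
(* rho on natural-number indices (identity outside 0..d-1) *)
Definition rhoN d (f : aut d) (j : nat) : nat :=
  match (insub j : option 'I_d) with Some x => val (rho f x) | None => j end.

Definition subgroup_aut d (G : aut d -> Prop) : Prop :=
  [/\ (forall f, G f -> is_aut f), G id,
      (forall f g, G f -> G g -> G (f \o g))
    & (forall f, G f -> exists g, [/\ G g, f \o g =1 id & g \o f =1 id])].

Definition self_similar d (G : aut d -> Prop) : Prop :=
  forall f x, G f -> G (section f x).

Inductive tree := Leaf | Node of seq tree.

Fixpoint wf_tree (d : nat) (T : tree) : bool :=
  match T with
  | Leaf => true
  | Node ts => (size ts == d) &&
      (fix aux ts := match ts with [::] => true | t :: ts' => wf_tree d t && aux ts' end) ts
  end.

Fixpoint leaves (d : nat) (T : tree) : seq (seq 'I_d) :=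
  match T with
  | Leaf => [:: [::]]
  | Node ts =>
      (fix aux (j : nat) (ts : seq tree) : seq (seq 'I_d) :=
         match ts with
         | [::] => [::]
         | t :: ts' =>
             match (insub j : option 'I_d) with
             | Some x => [seq x :: w | w <- leaves d t]
             | None => [::]
             end ++ aux j.+1 ts'
         end) 0 ts
  end.

(* add a d-caret at the k-th leaf (0-indexed, left to right) *)
Fixpoint addCaret (d : nat) (k : nat) (T : tree) : tree :=
  match T with
  | Leaf => if k == 0 then Node (nseq d Leaf) else Leaf
  | Node ts =>
      Node ((fix aux (k : nat) (ts : seq tree) : seq tree :=
               match ts with
               | [::] => [::]
               | t :: ts' =>
                   let m := size (leaves d t) in
                   if k < m then addCaret d k t :: ts' else t :: aux (k - m) ts'
               end) k ts)
  end.

(* Elements of S_n wr G: a permutation sigma of {0..n-1}, given as the     *)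
(* list of its values [sigma 0; ...; sigma (n-1)], and a list of n tree    *)
(* maps [f_0; ...; f_(n-1)] (0-indexed).                                   *)
Definition is_perm (n : nat) (s : seq nat) : bool := perm_eq s (iota 0 n).

Definition in_wr d (P : aut d -> Prop) (n : nat) (s : seq nat) (fs : seq (aut d)) : Prop :=
  [/\ is_perm n s, size fs = n & forall i, i < n -> P (nth id fs i)].

(* cloning map kappa_k^n (k 0-indexed): permutation part
   (sigma)varsigma_k^n composed (on the left action convention) with rho(f_k)^(k) *)
Definition clone_perm d (k : nat) (s : seq nat) (fs : seq (aut d)) : seq nat :=
  let sk := nth 0 s k in
  let sh j := if j < sk then j else j + d.-1 in
  let vs i := if i < k then sh (nth 0 s i)
              else if i < k + d then sk + (i - k)
              else sh (nth 0 s (i - d.-1)) in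
  let rk i := if (k <= i) && (i < k + d) then k + rhoN (nth id fs k) (i - k) else i in
  mkseq (fun i => vs (rk i)) (size s + d.-1).

Definition clone_maps d (k : nat) (fs : seq (aut d)) : seq (aut d) :=
  take k fs ++ [seq section (nth id fs k) x | x <- enum 'I_d] ++ drop k.+1 fs.

Record triple d := Triple { tm : tree; sg : seq nat; fs : seq (aut d); tp : tree }.
Arguments Triple {d}.

Definition valid_with d (P : aut d -> Prop) (x : triple d) : Prop :=
  [/\ wf_tree d (tm x), wf_tree d (tp x),
      size (leaves d (tm x)) = size (sg x),
      size (leaves d (tp x)) = size (sg x)
    & in_wr P (size (sg x)) (sg x) (fs x)].

Definition valid d (x : triple d) := valid_with (@is_aut d) x.

(* expansion at the k-th leaf of T_+ (k 0-indexed) *)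
Definition expand d (k : nat) (x : triple d) : triple d :=
  Triple (addCaret d (nth 0 (sg x) k) (tm x))
         (clone_perm k (sg x) (fs x))
         (clone_maps k (fs x))
         (addCaret d k (tp x)).

Definition expansion d (x y : triple d) : Prop :=
  valid x /\ exists k, k < size (sg x) /\ y = expand k x.

Definition equivT d : relation (triple d) := clos_refl_sym_trans _ (@expansion d).

(* [T_-, f, T_+][T_+, g, U_+] = [T_-, f g, U_+], with
   sigma(f) tau(g) = sigma tau (f_{tau(i)} g_i); maps compose as functions *)
Definition mult d (x y : triple d) : triple d :=
  Triple (tm x)
         (mkseq (fun i => nth 0 (sg x) (nth 0 (sg y) i)) (size (sg y)))
         (mkseq (fun i => nth id (fs x) (nth 0 (sg y) i) \o nth id (fs y) i) (size (sg y)))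
         (tp y).

Definition unitT d : triple d := Triple Leaf [:: 0] [:: id] Leaf.

Definition boundary d := nat -> 'I_d.

Definition bact d (f : aut d) (xi : boundary d) : boundary d :=
  fun m => nth (xi m) (f (mkseq xi m.+1)) m.

Definition bcat d (u : seq 'I_d) (eta : boundary d) : boundary d :=
  fun m => nth (eta (m - size u)) u m.

(* ((T_-, sigma(f_1..f_n), T_+)) : v_i w |-> u_{sigma(i)} f_i(w) *)
Definition homeo d (Tm : tree) (s : seq nat) (fs : seq (aut d)) (Tp : tree)
    (xi : boundary d) : boundary d :=
  let vs := leaves d Tp in
  let i := find (fun v => v == mkseq xi (size v)) vs in
  let v := nth [::] vs i in
  bcat (nth [::] (leaves d Tm) (nth 0 s i))
       (bact (nth id fs i) (fun m => xi (m + size v))).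

Definition Phi d (x : triple d) : boundary d -> boundary d :=
  homeo (tm x) (sg x) (fs x) (tp x).

Definition Vd d (G : aut d -> Prop) (h : boundary d -> boundary d) : Prop :=
  exists Tm Tp s fs, valid_with G (Triple Tm s fs Tp) /\ h = homeo Tm s fs Tp.

From mathcomp Require Import all_boot zify.
From Stdlib Require Import Relations FunctionalExtensionality.
Set Implicit Arguments. Unset Strict Implicit. Unset Printing Implicit Defensive.

(* Cloning [sigma(f_1,...,f_n)] at [k] replaces [f_k = rho(f_k)(f_k^1,...,f_k^d)] by its
   sections [f_k^x], which stay in [G] by self-similarity.  Correspondingly, an expansion
   splits the leaf [v_k] of [T_+] into the [v_k x] and the leaf [u_sigma(k)] of [T_-] into the
   [u_sigma(k) rho(f_k)(x)], so the boundary map ((T_-, g, T_+)) is unchanged.  Every boundary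
   point lies below exactly one leaf of a complete tree, hence two triples with the same [T_+]
   and the same boundary map are equal: their leaf words agree because, as d >= 2, a
   surjective [rho] can put any letter right after the shorter word.  As any two trees have a
   common refinement, the boundary map is well defined, multiplicative and injective on
   classes, and representatives with maps in [G] are closed under products and inverses. *)

(* The anonymous inner fixpoints of [leaves] and [addCaret]. *)
Fixpoint leaves_from d (j : nat) (ts : seq tree) : seq (seq 'I_d) :=
  if ts is t :: ts' then
    match (insub j : option 'I_d) with
    | Some x => [seq x :: w | w <- leaves d t] | None => [::] end
    ++ leaves_from d j.+1 ts'
  else [::].

Fixpoint caret_from d (k : nat) (ts : seq tree) : seq tree :=
  if ts is t :: ts' then
    if k < size (leaves d t) then addCaret d k t :: ts'
    else t :: caret_from d (k - size (leaves d t)) ts'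
  else [::].

Lemma leaves_Node d ts : leaves d (Node ts) = leaves_from d 0 ts.
Proof. by rewrite /=; move: 0; elim: ts => //= t ts IH j; rewrite IH. Qed.

Lemma addCaret_Node d k ts : addCaret d k (Node ts) = Node (caret_from d k ts).
Proof. by rewrite /=; congr Node; elim: ts k => //= t ts IH k; rewrite IH. Qed.

Lemma wf_Node d ts : wf_tree d (Node ts) = (size ts == d) && all (wf_tree d) ts.
Proof. by rewrite /=; congr andb; elim: ts => //= t ts ->. Qed.

Fixpoint tree_nth_ind (P : tree -> Prop) (PLeaf : P Leaf)
    (PNode : forall ts, (forall i, i < size ts -> P (nth Leaf ts i)) -> P (Node ts))
    (t : tree) : P t :=
  if t is Node ts then
    PNode ts ((fix children ts : forall i, i < size ts -> P (nth Leaf ts i) :=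
      if ts is t0 :: ts0 then
        fun i => if i is i'.+1 then children ts0 i'
                 else fun _ => tree_nth_ind PLeaf PNode t0
      else fun i hi => False_ind _ (Bool.diff_false_true hi)) ts)
  else PLeaf.

Lemma wf_Node_nth d ts i :
  wf_tree d (Node ts) -> i < d -> wf_tree d (nth Leaf ts i).
Proof. by rewrite wf_Node => /andP [/eqP <- /all_nthP]; apply. Qed.

Lemma leaves_from_neq_nil d j ts w : w \in leaves_from d j ts -> w != [::].
Proof.
elim: ts j => //= t ts IH j; rewrite mem_cat => /orP [|/IH //].
by case: insub => //= x /mapP [w' _ ->].
Qed.

Lemma size_leaves_from d j ts : j + size ts <= d ->
  size (leaves_from d j ts) = sumn [seq size (leaves d t) | t <- ts].
Proof.
elim: ts j => //= t ts IH j hs.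
have hj : j < d by lia.
rewrite insubT size_cat size_map IH //; lia.
Qed.

Definition bprefix d (xi : boundary d) : pred (seq 'I_d) :=
  fun v => v == mkseq xi (size v).

Definition btail d (xi : boundary d) : boundary d := fun m => xi m.+1.

Lemma mkseqSl T (f : nat -> T) n : mkseq f n.+1 = f 0 :: mkseq (fun m => f m.+1) n.
Proof. by rewrite /mkseq /= -[in iota 1 n](addn0 1) iotaDl -map_comp. Qed.

Lemma bprefix_cons d (xi : boundary d) x w :
  bprefix xi (x :: w) = (x == xi 0) && bprefix (btail xi) w.
Proof. by rewrite /bprefix /= mkseqSl eqseq_cons. Qed.

Lemma bprefix_bcat d (v : seq 'I_d) (eta : boundary d) : bprefix (bcat v eta) v.
Proof.
apply/eqP/(@eq_from_nth _ (eta 0)); rewrite ?size_mkseq // => i hi.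
by rewrite nth_mkseq // /bcat; apply: set_nth_default.
Qed.

Lemma count_bprefix_leaves_from d j ts (xi : boundary d) :
  (forall i, i < size ts -> forall xi, count (bprefix xi) (leaves d (nth Leaf ts i)) = 1) ->
  j + size ts <= d ->
  count (bprefix xi) (leaves_from d j ts) = (j <= xi 0 < j + size ts).
Proof.
elim: ts j => [|t ts IH] j H /= hs.
  by rewrite addn0; case: (leqP j (xi 0)) => h //=; rewrite ltnNge h.
have hj : j < d by lia.
rewrite insubT count_cat count_map.
under eq_count => w do rewrite /= bprefix_cons.
rewrite IH; [|by move=> i; apply: (H i.+1) | lia].
case: eqP => [<-|ne] /=.
  by rewrite (H 0) //=; lia.
rewrite (eq_count (a2 := pred0)) // count_pred0.
have /eqP : j != xi 0 by apply/eqP => e; apply: ne; apply: val_inj.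
lia.
Qed.

Lemma count_bprefix_leaves d (T : tree) (xi : boundary d) :
  wf_tree d T -> count (bprefix xi) (leaves d T) = 1.
Proof.
elim/tree_nth_ind: T xi => [//|ts IH] xi hw; rewrite leaves_Node.
have /andP [/eqP hs _] := hw.
rewrite count_bprefix_leaves_from ?hs //=; first by rewrite ltn_ord.
by move=> i hi xi'; apply: IH; [rewrite hs | exact: wf_Node_nth].
Qed.

Lemma find_count1 T (p : pred T) (s : seq T) x0 i :
  count p s = 1 -> i < size s -> p (nth x0 s i) -> find p s = i.
Proof.
elim: s i => [|a s IH] [|i] //= hc hi hp; first by rewrite hp.
have hs : 0 < count p s by rewrite -has_count; apply/(has_nthP x0); exists i.
by case: (p a) hc => /=; [lia | rewrite add0n => hc; rewrite (IH i)].
Qed.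

Lemma find_bprefix_leaves d T (xi : boundary d) i :
  wf_tree d T -> i < size (leaves d T) ->
  bprefix xi (nth [::] (leaves d T) i) -> find (bprefix xi) (leaves d T) = i.
Proof. by move=> hw; apply: find_count1 (count_bprefix_leaves xi hw). Qed.

Lemma bprefix_leaf_exists d T (xi : boundary d) : wf_tree d T ->
  exists2 i, i < size (leaves d T) & bprefix xi (nth [::] (leaves d T) i).
Proof.
move=> hw; have hh : has (bprefix xi) (leaves d T) by rewrite has_count count_bprefix_leaves.
by exists (find (bprefix xi) (leaves d T)); [rewrite -has_find | apply: nth_find].
Qed.

Lemma uniq_leaves d T : 0 < d -> wf_tree d T -> uniq (leaves d T).
Proof.
move=> hd hw; apply/(uniqP [::]) => i j hi hj e.
pose xi := bcat (nth [::] (leaves d T) i) (fun=> Ordinal hd).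
have hpi : bprefix xi (nth [::] (leaves d T) i) by apply: bprefix_bcat.
have hpj : bprefix xi (nth [::] (leaves d T) j) by rewrite -e.
by rewrite -(find_bprefix_leaves hw hi hpi) (find_bprefix_leaves hw hj hpj).
Qed.

Definition splice T (k : nat) (s t : seq T) : seq T := take k s ++ t ++ drop k.+1 s.

(* New position of item [j <> k] once item [k] has been replaced by [m.+1] items. *)
Definition shift_past (k m j : nat) : nat := if j < k then j else j + m.

Section Splice.
Variables (T : Type) (x0 : T) (k : nat) (s t : seq T).
Hypotheses (hk : k < size s) (ht : 0 < size t).

Lemma size_splice : size (splice k s t) = size s + (size t).-1.
Proof. rewrite !size_cat size_takel ?size_drop; lia. Qed.

Lemma nth_splice i : nth x0 (splice k s t) i =
  if i < k then nth x0 s i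
  else if i < k + size t then nth x0 t (i - k) else nth x0 s (i - (size t).-1).
Proof.
rewrite nth_cat size_takel; last exact: ltnW.
case: ltnP => h1; first by rewrite nth_take.
rewrite nth_cat; case: ltnP => h2; first by rewrite ifT //; lia.
by rewrite ifF ?nth_drop; [congr nth; lia | lia].
Qed.

Lemma nth_splice_shift j :
  j != k -> nth x0 (splice k s t) (shift_past k (size t).-1 j) = nth x0 s j.
Proof.
move=> hj; rewrite nth_splice /shift_past.
case: (ltnP j k) => h; first by rewrite h.
by rewrite !ifF ?addnK //; lia.
Qed.

Lemma nth_splice_block i : i < size t -> nth x0 (splice k s t) (k + i) = nth x0 t i.
Proof. by move=> hi; rewrite nth_splice ifF 1?ifT ?addKn //; lia. Qed.

End Splice.

Section SpliceEnum.
Variables (T : Type) (x0 : T) (d k : nat) (s : seq T) (F : 'I_d -> T).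
Hypotheses (hd : 0 < d) (hk : k < size s).
Let hFd : 0 < size [seq F x | x <- enum 'I_d]. Proof. by rewrite size_map size_enum_ord. Qed.

Lemma size_splice_enum : size (splice k s [seq F x | x <- enum 'I_d]) = size s + d.-1.
Proof. by rewrite size_splice // size_map size_enum_ord. Qed.

Lemma nth_splice_enum_shift j : j != k ->
  nth x0 (splice k s [seq F x | x <- enum 'I_d]) (shift_past k d.-1 j) = nth x0 s j.
Proof.
by move=> hj; rewrite -(nth_splice_shift x0 hk hFd hj) size_map size_enum_ord.
Qed.

Lemma nth_splice_enum_block (x : 'I_d) :
  nth x0 (splice k s [seq F x | x <- enum 'I_d]) (k + x) = F x.
Proof.
have hx : x < size (enum 'I_d) by rewrite size_enum_ord.
rewrite nth_splice_block //; last by rewrite size_map.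
by rewrite (nth_map x) // nth_ord_enum.
Qed.

End SpliceEnum.

Definition split_leaf d (L : seq (seq 'I_d)) k :=
  splice k L [seq rcons (nth [::] L k) x | x <- enum 'I_d].

Definition caret_spec d t := forall k, k < size (leaves d t) ->
  wf_tree d (addCaret d k t) /\ leaves d (addCaret d k t) = split_leaf (leaves d t) k.

Lemma dropl_cat T n (s1 s2 : seq T) : n <= size s1 -> drop n (s1 ++ s2) = drop n s1 ++ s2.
Proof.
move=> h; rewrite drop_cat; case: ltnP => // h'.
have -> : n = size s1 by lia.
by rewrite subnn drop0 drop_size.
Qed.

Lemma leaves_from_caret_from d j ts k :
  (forall i, i < size ts -> caret_spec d (nth Leaf ts i)) -> j + size ts <= d ->
  all (wf_tree d) ts -> k < size (leaves_from d j ts) ->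
  [/\ all (wf_tree d) (caret_from d k ts), size (caret_from d k ts) = size ts &
      leaves_from d j (caret_from d k ts) = split_leaf (leaves_from d j ts) k].
Proof.
elim: ts j k => [|t ts IH] j k //= H hs /andP [wt wts].
have hj : j < d by lia.
rewrite insubT /= size_cat size_map => hk.
case: (ltnP k (size (leaves d t))) => hm.
  have [w1 e1] := H 0 erefl k hm.
  rewrite /= w1 wts insubT e1; split => //.
  rewrite /split_leaf /splice take_cat size_map hm nth_cat size_map hm dropl_cat ?size_map //.
  rewrite (nth_map [::]) // !map_cat -!map_take -map_drop -!catA; congr (_ ++ _).
  by rewrite -map_comp; congr (_ ++ _); apply: eq_map => x /=; rewrite rcons_cons.
have [|||w1 e1 e2] := IH j.+1 (k - size (leaves d t)) (fun i => H i.+1); try lia.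
rewrite /= wt w1 e1 insubT; split => //.
rewrite e2 /split_leaf /splice take_cat size_map ltnNge hm /= nth_cat size_map ltnNge hm /=.
by rewrite drop_cat size_map ltnNge (leq_trans hm) // subSn // !catA.
Qed.

Lemma leaves_from_nseq_Leaf d j m : j + m = d ->
  leaves_from d j (nseq m Leaf) = [seq [:: x] | x <- drop j (enum 'I_d)].
Proof.
elim: m j => [|m IH] j /= hj.
  by rewrite drop_oversize // size_enum_ord -hj addn0.
have hjd : j < d by lia.
rewrite insubT IH; last by lia.
rewrite (drop_nth (Ordinal hjd)) ?size_enum_ord //=.
by congr (_ :: _); congr [:: _]; apply: val_inj; rewrite /= nth_enum_ord.
Qed.

Lemma addCaret_wf_leaves d T : wf_tree d T -> caret_spec d T.
Proof.
elim/tree_nth_ind: T => [|ts IH].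
  move=> _ [|k] // _.
  have -> : addCaret d 0 Leaf = Node (nseq d Leaf) by [].
  rewrite wf_Node leaves_Node size_nseq eqxx all_nseq orbT leaves_from_nseq_Leaf //=.
  by rewrite /split_leaf /splice /= drop0 cats0; split => //; apply: eq_map.
move=> hw k; have /andP [/eqP hs hws] := hw; rewrite leaves_Node => hk.
have H : forall i, i < size ts -> caret_spec d (nth Leaf ts i).
  by move=> i hi; apply: IH => //; apply: wf_Node_nth => //; rewrite -hs.
have [|w1 e1 e2] := leaves_from_caret_from H _ hws hk; first by rewrite hs.
by rewrite addCaret_Node wf_Node leaves_Node e1 hs eqxx w1 e2.
Qed.

Inductive refines d : tree -> tree -> Prop :=
| refines_refl T : refines d T T
| refines_step T k R : k < size (leaves d T) -> refines d (addCaret d k T) R -> refines d T R.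

Lemma refines_trans d T1 T2 T3 : refines d T1 T2 -> refines d T2 T3 -> refines d T1 T3.
Proof. by elim=> // U k R hk _ IH /IH; apply: refines_step. Qed.

Definition leaf_offset d (ts : seq tree) i := sumn [seq size (leaves d t) | t <- take i ts].

Lemma caret_from_offset d ts i k :
  i < size ts -> k < size (leaves d (nth Leaf ts i)) ->
  caret_from d (leaf_offset d ts i + k) ts = set_nth Leaf ts i (addCaret d k (nth Leaf ts i)).
Proof.
rewrite /leaf_offset; elim: ts i => [|t ts IH] [|i] //= hi hk; first by rewrite hk.
by rewrite -addnA ltnNge leq_addr /= addKn IH.
Qed.

Lemma leaf_offset_lt d ts i k :
  i < size ts -> k < size (leaves d (nth Leaf ts i)) ->
  leaf_offset d ts i + k < sumn [seq size (leaves d t) | t <- ts].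
Proof.
rewrite /leaf_offset; elim: ts i => [|t ts IH] [|i] //= hi hk; first by lia.
by rewrite -addnA ltn_add2l IH.
Qed.

Lemma set_nth_id T (x0 : T) s i : i < size s -> set_nth x0 s i (nth x0 s i) = s.
Proof. by elim: s i => [|a s IH] [|i] //= h; rewrite IH. Qed.

Lemma refines_child d ts i t : size ts = d -> i < d -> refines d (nth Leaf ts i) t ->
  refines d (Node ts) (Node (set_nth Leaf ts i t)).
Proof.
move=> hs hi h; move Et0: (nth Leaf ts i) h => t0 h.
elim: h ts hs Et0 => [U|U k R hk _ IH] ts hs e.
  by rewrite -e set_nth_id ?hs //; apply: refines_refl.
apply: (refines_step (k := leaf_offset d ts i + k)).
  by rewrite leaves_Node size_leaves_from ?hs // leaf_offset_lt ?hs // e.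
rewrite addCaret_Node caret_from_offset ?hs ?e //.
have := IH (set_nth Leaf ts i (addCaret d k U)).
rewrite set_set_nth eqxx nth_set_nth /= eqxx; apply => //.
by rewrite size_set_nth hs; apply/maxn_idPr.
Qed.

Lemma refines_children d ts ts' : size ts = d -> size ts' = d ->
  (forall i, i < d -> refines d (nth Leaf ts i) (nth Leaf ts' i)) ->
  refines d (Node ts) (Node ts').
Proof.
move=> hs hs' H.
suff: forall m, m <= d -> refines d (Node ts) (Node (take m ts' ++ drop m ts)).
  by move/(_ d (leqnn d)); rewrite drop_oversize ?hs // cats0 take_oversize ?hs'.
elim=> [|m IH] hm; first by rewrite take0 drop0; apply: refines_refl.
apply: refines_trans (IH (ltnW hm)) _.
have -> : take m.+1 ts' ++ drop m.+1 ts =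
    set_nth Leaf (take m ts' ++ drop m ts) m (nth Leaf ts' m).
  apply: (@eq_from_nth _ Leaf) => [|j _].
    rewrite size_set_nth !size_cat !size_takel ?size_drop; lia.
  rewrite nth_set_nth /= !nth_cat !size_takel; try lia.
  case: (ltngtP j m) => hj; last by rewrite hj ltnSn nth_take.
    by rewrite ifT ?nth_take //; lia.
  by rewrite ifF ?nth_drop; [congr nth; lia | lia].
apply: refines_child => //; first by rewrite size_cat size_takel ?size_drop; lia.
rewrite nth_cat size_takel ?ltnn ?subnn ?nth_drop ?addn0; [exact: H | lia].
Qed.

Lemma refines_Leaf d R : wf_tree d R -> refines d Leaf R.
Proof.
elim/tree_nth_ind: R => [|ts IH] hw; first exact: refines_refl.
have /andP [/eqP hs _] := hw.
apply: (refines_step (k := 0)) => //.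
apply: refines_children; rewrite ?size_nseq // => i hi.
by rewrite nth_nseq hi; apply: IH; [rewrite hs | exact: wf_Node_nth].
Qed.

Lemma exists_seq T (x0 : T) n (P : nat -> T -> Prop) :
  (forall i, i < n -> exists t, P i t) ->
  exists2 ts, size ts = n & forall i, i < n -> P i (nth x0 ts i).
Proof.
elim: n P => [|n IH] P H; first by exists [::].
have [t ht] := H 0 (ltn0Sn n).
have [ts h1 h2] := IH (fun i => P i.+1) (fun i hi => H i.+1 hi).
by exists (t :: ts) => [|[|i] hi] //=; [rewrite h1 | apply: h2].
Qed.

Lemma common_refinement d T1 T2 : wf_tree d T1 -> wf_tree d T2 ->
  exists R, refines d T1 R /\ refines d T2 R.
Proof.
elim/tree_nth_ind: T1 T2 => [|ts IH] T2 h1 h2.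
  by exists T2; split; [apply: refines_Leaf | apply: refines_refl].
case: T2 h2 => [|ts'] h2.
  by exists (Node ts); split; [apply: refines_refl | apply: refines_Leaf].
have /andP [/eqP hs _] := h1; have /andP [/eqP hs' _] := h2.
have H i : i < d -> exists R, refines d (nth Leaf ts i) R /\ refines d (nth Leaf ts' i) R.
  by move=> hi; apply: IH; rewrite ?hs //; apply: wf_Node_nth.
have [Rs hRs hR] := exists_seq Leaf H.
by exists (Node Rs); split; apply: refines_children => // i /hR [].
Qed.

Lemma behead_leaves_from d j ts (x : 'I_d) : j + size ts <= d ->
  [seq behead w | w <- leaves_from d j ts & ohead w == Some x] =
  if j <= x < j + size ts then leaves d (nth Leaf ts (x - j)) else [::].
Proof.
elim: ts j => [|t ts IH] j /= hs.
  by rewrite addn0; case: (leqP j x) => h //=; rewrite ltnNge h.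
have hj : j < d by lia.
rewrite insubT filter_cat map_cat IH; last by lia.
rewrite filter_map -map_comp /=.
case: (ltngtP j x) => h.
- rewrite (eq_filter (a2 := pred0)); last first.
    by move=> w /=; apply/eqP => -[] e; move: h; rewrite -e /=; lia.
  by rewrite filter_pred0 /= addSnnS -(subnSK h).
- rewrite (eq_filter (a2 := pred0)); last first.
    by move=> w /=; apply/eqP => -[] e; move: h; rewrite -e /=; lia.
  by rewrite filter_pred0.
- rewrite (eq_filter (a2 := predT)); last by move=> w /=; apply/eqP; congr Some; apply: val_inj.
  rewrite filter_predT map_id -h subnn /= ifT ?ifF ?cats0 //; lia.
Qed.

Lemma leaves_inj d T1 T2 : wf_tree d T1 -> wf_tree d T2 ->
  perm_eq (leaves d T1) (leaves d T2) -> T1 = T2.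
Proof.
elim/tree_nth_ind: T1 T2 => [|ts IH] [|ts'] // h1 h2; rewrite ?leaves_Node => hp.
- by have /leaves_from_neq_nil : [::] \in leaves_from d 0 ts' by rewrite -(perm_mem hp) inE.
- by have /leaves_from_neq_nil : [::] \in leaves_from d 0 ts by rewrite (perm_mem hp) inE.
have /andP [/eqP hs _] := h1; have /andP [/eqP hs' _] := h2.
congr Node; apply: (@eq_from_nth _ Leaf) => [|i]; first by rewrite hs hs'.
rewrite hs => hi; apply: IH; rewrite ?hs //; try exact: wf_Node_nth.
have := perm_map behead (perm_filter (fun w => ohead w == Some (Ordinal hi)) hp).
by rewrite !behead_leaves_from ?hs ?hs' //= add0n hi subn0.
Qed.

Section TreeMaps.
Variable d : nat.
Implicit Types (f g : aut d) (w : seq 'I_d) (eta xi : boundary d).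

Lemma aut_take f : is_aut f -> forall w m, f (take m w) = take m (f w).
Proof.
case=> hs hp _; elim/last_ind => [|w x IH] m; first by rewrite /= (size0nil (hs [::])).
case: (leqP m (size w)) => hm; last by rewrite !take_oversize ?hs ?size_rcons.
by rewrite -cats1 takel_cat // cats1 IH -(hp w x) take_takel.
Qed.

Lemma aut_cons f x w : is_aut f -> f (x :: w) = rho f x :: section f x w.
Proof.
move=> ha; have [hs _ _] := ha.
have := aut_take ha (x :: w) 1; rewrite /= take0 /section /rho.
by case: (f (x :: w)) (hs (x :: w)) => //= y w' _ ->.
Qed.

Lemma aut_single f x : is_aut f -> f [:: x] = [:: rho f x].
Proof.
move=> ha; rewrite (aut_cons x [::] ha); congr cons; apply: size0nil.
by case: ha => hs _ _; rewrite size_behead hs.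
Qed.

Lemma aut_id : is_aut (@id (seq 'I_d)).
Proof.
split=> //; last by exists id.
by move=> w x; rewrite -cats1 takel_cat // take_size.
Qed.

Lemma aut_comp f g : is_aut f -> is_aut g -> is_aut (f \o g).
Proof.
move=> hf [hsg hpg hbg]; have [hsf _ hbf] := hf.
split=> [w|w x|]; rewrite /= ?hsf ?hsg //; first by rewrite -aut_take // hpg.
exact: bij_comp.
Qed.

Lemma aut_inv f g : is_aut f -> cancel f g -> cancel g f -> is_aut g.
Proof.
move=> ha fK gK; have [hs _ _] := ha.
have hsg w : size (g w) = size w by rewrite -{2}(gK w) hs.
have htg w m : g (take m w) = take m (g w).
  by apply: (can_inj fK); rewrite gK aut_take // gK.
split=> //; last by exists f.
by move=> w x; rewrite -htg -cats1 takel_cat // take_size.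
Qed.

Lemma rho_inj f : is_aut f -> injective (rho f).
Proof.
move=> ha x y e; have [_ _ [g fK _]] := ha.
by have := fK [:: x]; rewrite aut_single // e -aut_single // fK => -[].
Qed.

Lemma rho_surj f c : is_aut f -> exists x, rho f x = c.
Proof.
move=> ha; have [hs _ [g fK gK]] := ha.
have : size (g [:: c]) = 1 by rewrite -(hs (g [:: c])) gK.
case e: (g [:: c]) => [|x [|y w]] // _.
by exists x; have := gK [:: c]; rewrite e aut_single // => -[].
Qed.

Lemma section_aut f x : is_aut f -> is_aut (section f x).
Proof.
move=> ha; have [hs hp [g fK gK]] := ha.
have hg := aut_inv ha fK gK.
have rK : rho g (rho f x) = x by rewrite {1}/rho -aut_single // fK.
split.
- by move=> w; rewrite /section size_behead hs.
- move=> w y; rewrite /section -rcons_cons -(hp (x :: w) y) /=.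
  by case: (f _) => //= a s; rewrite take_cons.
- exists (section g (rho f x)) => w; rewrite /section.
    by rewrite -[rho f x :: _](aut_cons x w ha) fK.
  by rewrite -[x in x :: _]rK -aut_cons // gK.
Qed.

Lemma mkseq_bcat w eta m : m <= size w -> mkseq (bcat w eta) m = take m w.
Proof.
move=> hm; apply: (@eq_from_nth _ (eta 0)); first by rewrite size_mkseq size_takel.
move=> i; rewrite size_mkseq => hi.
by rewrite nth_mkseq // nth_take // /bcat; apply: set_nth_default; lia.
Qed.

Lemma bcat_mkseq eta n : bcat (mkseq eta n) (fun p => eta (p + n)) = eta.
Proof.
apply: functional_extensionality => m; rewrite /bcat size_mkseq.
by case: (ltnP m n) => h; [rewrite nth_mkseq | rewrite nth_default ?size_mkseq // subnK].
Qed.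

Lemma bcat_shift w eta : (fun m => bcat w eta (m + size w)) = eta.
Proof.
by apply: functional_extensionality => m; rewrite /bcat nth_default ?addnK // leq_addl.
Qed.

Lemma bcat_inj w : injective (bcat w).
Proof. by move=> e1 e2 e; rewrite -(bcat_shift w e1) e bcat_shift. Qed.

Lemma bact_bcat f w eta : is_aut f -> mkseq (bact f (bcat w eta)) (size w) = f w.
Proof.
move=> ha; have [hs _ _] := ha.
apply: (@eq_from_nth _ (eta 0)); first by rewrite size_mkseq hs.
move=> i; rewrite size_mkseq => hi; rewrite nth_mkseq // /bact mkseq_bcat //.
by rewrite aut_take // nth_take //; apply: set_nth_default; rewrite hs.
Qed.

Lemma mkseq_bact f eta n : is_aut f -> mkseq (bact f eta) n = f (mkseq eta n).
Proof.
by move=> ha; rewrite -(bact_bcat _ (fun p => eta (p + n))) // bcat_mkseq size_mkseq.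
Qed.

Lemma bact_comp f g eta : is_aut f -> is_aut g ->
  bact (f \o g) eta = bact f (bact g eta).
Proof.
move=> hf hg; apply: functional_extensionality => m.
rewrite /bact /= mkseq_bact //; apply: set_nth_default.
by case: hf hg => hs _ _ [hs' _ _]; rewrite hs hs' size_mkseq.
Qed.

Lemma bact_id f eta : f =1 id -> bact f eta = eta.
Proof. by move=> h; apply: functional_extensionality => m; rewrite /bact h nth_mkseq. Qed.

Definition bcons (a : 'I_d) eta : boundary d := fun m => if m is m'.+1 then eta m' else a.

Lemma bcons_btail eta : bcons (eta 0) (btail eta) = eta.
Proof. by apply: functional_extensionality => -[]. Qed.

Lemma bcat_rcons w a eta : bcat (rcons w a) eta = bcat w (bcons a eta).
Proof.
apply: functional_extensionality => m; rewrite /bcat nth_rcons size_rcons.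
case: (ltngtP m (size w)) => h.
- by apply: set_nth_default.
- by rewrite nth_default 1?ltnW // /bcons; case E: (m - size w) => [|p]; [lia | congr eta; lia].
- by rewrite h nth_default // subnn.
Qed.

Lemma bact_cons f eta : is_aut f ->
  bact f eta = bcons (rho f (eta 0)) (bact (section f (eta 0)) (btail eta)).
Proof.
move=> ha; apply: functional_extensionality => [[|m]].
  by rewrite /bact /= aut_single.
by rewrite /bact mkseqSl aut_cons.
Qed.

End TreeMaps.

Lemma is_permP n s :
  reflect [/\ uniq s, size s = n & forall i, i \in s -> i < n] (is_perm n s).
Proof.
apply: (iffP idP) => [hp | [hu hs hb]].
  by split; [rewrite (perm_uniq hp) iota_uniq | rewrite (perm_size hp) size_iota
            | move=> i; rewrite (perm_mem hp) mem_iota].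
apply: uniq_perm; rewrite ?iota_uniq //.
have sub : {subset s <= iota 0 n} by move=> i /hb; rewrite mem_iota.
by case: (uniq_min_size hu sub (eq_leq (etrans (size_iota 0 n) (esym hs)))).
Qed.

Lemma shift_past_inj k m : injective (shift_past k m).
Proof. by move=> i j; rewrite /shift_past; do 2!case: ifP; lia. Qed.

Lemma shift_past_notin_block k m j : j != k -> ~~ (k <= shift_past k m j < k + m.+1).
Proof. by rewrite /shift_past; case: ifP; lia. Qed.

Lemma shift_past_or_block k m n i : k < n -> i < n + m ->
  (exists j, [/\ j < n, j != k & i = shift_past k m j]) \/ exists2 x, x <= m & i = k + x.
Proof.
move=> hk hi; rewrite /shift_past; case: (ltnP i k) => h1.
  by left; exists i; rewrite h1; split => //; lia.
case: (ltnP i (k + m.+1)) => h2; first by right; exists (i - k); lia.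
by left; exists (i - m); rewrite ifF; [split; lia | lia].
Qed.

Lemma rhoN_ord d (f : aut d) (x : 'I_d) : rhoN f x = rho f x.
Proof. by rewrite /rhoN valK. Qed.

Section Cloning.
Variables (d k : nat) (s : seq nat) (fs : seq (aut d)).
Hypotheses (hd : 0 < d) (hk : k < size s).

Lemma size_clone_perm : size (clone_perm k s fs) = size s + d.-1.
Proof. exact: size_mkseq. Qed.

Lemma nth_clone_perm_shift j : j < size s -> j != k ->
  nth 0 (clone_perm k s fs) (shift_past k d.-1 j) =
  shift_past (nth 0 s k) d.-1 (nth 0 s j).
Proof.
move=> hj hjk; rewrite /shift_past; case: (ltnP j k) => h.
  rewrite nth_mkseq; last lia.
  have -> : (k <= j < k + d) = false by lia.
  by rewrite h.
rewrite nth_mkseq; last lia.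
have -> : (k <= j + d.-1 < k + d) = false by lia.
by rewrite ifF 1?ifF ?addnK //; lia.
Qed.

Lemma nth_clone_perm_block (x : 'I_d) :
  nth 0 (clone_perm k s fs) (k + x) = nth 0 s k + rho (nth id fs k) x.
Proof.
have hx := ltn_ord x; have hr := ltn_ord (rho (nth id fs k) x).
rewrite nth_mkseq; last lia.
have -> : (k <= k + x < k + d) = true by lia.
by rewrite addKn rhoN_ord ifF ?ifT ?addKn //; lia.
Qed.

Lemma clone_index_cases i : i < size s + d.-1 ->
  (exists j, [/\ j < size s, j != k & i = shift_past k d.-1 j]) \/ exists x : 'I_d, i = k + x.
Proof.
move/(shift_past_or_block hk) => [|[x hx ->]]; first by left.
have hxd : x < d by lia.
by right; exists (Ordinal hxd).
Qed.

Lemma clone_perm_is_perm : is_perm (size s) s -> is_aut (nth id fs k) ->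
  is_perm (size s + d.-1) (clone_perm k s fs).
Proof.
move=> /is_permP [hu _ hb] ha; set n := size s in hb *.
have hs i : i < n -> nth 0 s i < n by move=> hi; apply/hb/mem_nth.
have hsk := hs k hk.
have hsne j : j < n -> j != k -> nth 0 s j != nth 0 s k by move=> hj; rewrite nth_uniq.
apply/is_permP; split; last 1 first.
- move=> y /(nthP 0) [i]; rewrite size_clone_perm => hi <-.
  case: (clone_index_cases hi) => [[j [hj hjk ->]] | [x ->]].
    by rewrite nth_clone_perm_shift // /shift_past; case: ifP; have := hs j hj; lia.
  by rewrite nth_clone_perm_block; have := ltn_ord (rho (nth id fs k) x); lia.
- apply/(uniqP 0) => i j; rewrite !inE size_clone_perm => hi hj.
  case: (clone_index_cases hi) => [[i' [hi' hik ->]] | [x ->]];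
  case: (clone_index_cases hj) => [[j' [hj' hjk ->]] | [y ->]];
  rewrite ?nth_clone_perm_shift ?nth_clone_perm_block //.
  + by move/shift_past_inj/eqP; rewrite nth_uniq // => /eqP ->.
  + move=> e; have := shift_past_notin_block d.-1 (hsne i' hi' hik).
    by rewrite e; have := ltn_ord (rho (nth id fs k) y); lia.
  + move=> e; have := shift_past_notin_block d.-1 (hsne j' hj' hjk).
    by rewrite -e; have := ltn_ord (rho (nth id fs k) x); lia.
  + by move/addnI/val_inj => e; rewrite (rho_inj ha e).
- exact: size_clone_perm.
Qed.

Lemma size_clone_maps : k < size fs -> size (clone_maps k fs) = size fs + d.-1.
Proof. exact: (@size_splice_enum _ d k fs (section (nth id fs k))). Qed.

Lemma nth_clone_maps_shift j : k < size fs -> j != k ->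
  nth id (clone_maps k fs) (shift_past k d.-1 j) = nth id fs j.
Proof. by move=> hfs; apply: (@nth_splice_enum_shift _ id d k fs (section (nth id fs k))). Qed.

Lemma nth_clone_maps_block (x : 'I_d) :
  k < size fs -> nth id (clone_maps k fs) (k + x) = section (nth id fs k) x.
Proof. by move=> hfs; apply: (@nth_splice_enum_block _ id d k fs (section (nth id fs k))). Qed.

End Cloning.

Lemma leaf_cover d T (xi : boundary d) : wf_tree d T ->
  exists i eta, i < size (leaves d T) /\ xi = bcat (nth [::] (leaves d T) i) eta.
Proof.
move=> hw; have [i hi /eqP hp] := bprefix_leaf_exists xi hw.
set v := nth [::] (leaves d T) i in hp *.
exists i, (fun m => xi (m + size v)); split => //.
by have := bcat_mkseq xi (size v); rewrite -hp.
Qed.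

Lemma eq_on_leaves d T (h h' : boundary d -> boundary d) : wf_tree d T ->
  (forall i eta, i < size (leaves d T) ->
     h (bcat (nth [::] (leaves d T) i) eta) = h' (bcat (nth [::] (leaves d T) i) eta)) ->
  h = h'.
Proof.
move=> hw H; apply: functional_extensionality => xi.
by have [i [eta [hi ->]]] := leaf_cover xi hw; apply: H.
Qed.

Lemma homeo_bcat d Tm s (fs : seq (aut d)) Tp i eta :
  wf_tree d Tp -> i < size (leaves d Tp) ->
  homeo Tm s fs Tp (bcat (nth [::] (leaves d Tp) i) eta) =
  bcat (nth [::] (leaves d Tm) (nth 0 s i)) (bact (nth id fs i) eta).
Proof.
move=> hw hi; rewrite /homeo.
have -> : find (bprefix (bcat (nth [::] (leaves d Tp) i) eta)) (leaves d Tp) = i.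
  by apply: find_bprefix_leaves => //; apply: bprefix_bcat.
by rewrite bcat_shift.
Qed.

Lemma valid_with_sub d (P Q : aut d -> Prop) (x : triple d) :
  (forall f, P f -> Q f) -> valid_with P x -> valid_with Q x.
Proof. by move=> h [? ? ? ? [? ? hP]]; split => //; split => // i /hP /h. Qed.

Lemma size_leaves_addCaret d T k : 0 < d -> wf_tree d T -> k < size (leaves d T) ->
  size (leaves d (addCaret d k T)) = size (leaves d T) + d.-1.
Proof.
by move=> hd hw hk; have [_ ->] := addCaret_wf_leaves hw hk; rewrite size_splice_enum.
Qed.

Section Expansion.
Variables (d : nat) (P : aut d -> Prop).
Hypotheses (hd : 0 < d) (hPa : forall f, P f -> is_aut f)
  (hPs : forall f x, P f -> P (section f x)).

Lemma clone_in_wr n s fs k :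
  in_wr P n s fs -> k < n -> in_wr P (n + d.-1) (clone_perm k s fs) (clone_maps k fs).
Proof.
move=> [hp hsz hP] hk; have /is_permP [_ hs _] := hp.
rewrite -hs in hp hsz hP hk *.
split; first by apply: (clone_perm_is_perm hd hk hp); apply/hPa/hP.
  by rewrite size_clone_maps ?hsz.
move=> i /(clone_index_cases hd hk) [[j [hj hjk ->]] | [x ->]].
  by rewrite nth_clone_maps_shift ?hsz //; apply: hP.
by rewrite nth_clone_maps_block ?hsz //; apply/hPs/hP.
Qed.

Lemma valid_expand (x : triple d) k :
  valid_with P x -> k < size (sg x) -> valid_with P (expand k x).
Proof.
case: x => Tm s fs Tp [/= hwm hwp hlm hlp hw] hk.
have [/is_permP [_ _ hb] _ _] := hw.
have hkm : nth 0 s k < size (leaves d Tm) by rewrite hlm; apply/hb/mem_nth.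
have hkp : k < size (leaves d Tp) by rewrite hlp.
split; rewrite /= ?size_clone_perm ?size_leaves_addCaret ?hlm ?hlp //.
- by case: (addCaret_wf_leaves hwm hkm).
- by case: (addCaret_wf_leaves hwp hkp).
- by rewrite -hlm.
- exact: clone_in_wr.
Qed.

Lemma equivT_expand (x : triple d) k :
  valid_with P x -> k < size (sg x) -> equivT x (expand k x).
Proof. by move=> hv hk; apply: rst_step; split; [exact: valid_with_sub hv | exists k]. Qed.

Lemma refine_tp (x : triple d) R : valid_with P x -> refines d (tp x) R ->
  exists x', [/\ equivT x x', valid_with P x' & tp x' = R].
Proof.
move=> hv h; move Ex: (tp x) h => T h; elim: h x hv Ex => [U|U k R' hk _ IH] x hv e.
  by exists x; split => //; apply: rst_refl.
have hk' : k < size (sg x) by case: hv => _ _ _ <-; rewrite e.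
have [|x' [h1 h2 h3]] := IH (expand k x) (valid_expand hv hk'); first by rewrite /= e.
by exists x'; split => //; apply: rst_trans h1; apply: equivT_expand.
Qed.

(* A caret at leaf [j] of [T_-] comes from the expansion at leaf [sigma^-1 j] of [T_+]. *)
Lemma refine_tm (x : triple d) R : valid_with P x -> refines d (tm x) R ->
  exists x', [/\ equivT x x', valid_with P x' & tm x' = R].
Proof.
move=> hv h; move Ex: (tm x) h => T h; elim: h x hv Ex => [U|U j R' hj _ IH] x hv e.
  by exists x; split => //; apply: rst_refl.
have [_ _ hl _ [hp _ _]] := hv.
have hjs : j \in sg x by rewrite (perm_mem hp) mem_iota -hl e.
have hk : index j (sg x) < size (sg x) by rewrite index_mem.
have [|x' [h1 h2 h3]] := IH _ (valid_expand hv hk); first by rewrite /= nth_index // e.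
by exists x'; split => //; apply: rst_trans h1; apply: equivT_expand.
Qed.

Lemma composable_equivT (x y : triple d) : valid_with P x -> valid_with P y ->
  exists x' y', [/\ equivT x x', equivT y y', valid_with P x', valid_with P y' & tp x' = tm y'].
Proof.
move=> hx hy; have [_ hw1 _ _ _] := hx; have [hw2 _ _ _ _] := hy.
have [R [r1 r2]] := common_refinement hw1 hw2.
have [x' [e1 v1 t1]] := refine_tp hx r1; have [y' [e2 v2 t2]] := refine_tm hy r2.
by exists x', y'; rewrite t1 t2.
Qed.

End Expansion.

Lemma Phi_expand d (x : triple d) k : 0 < d -> valid x -> k < size (sg x) ->
  Phi (expand k x) = Phi x.
Proof.
case: x => Tm s fs Tp hd [/= hwm hwp hlm hlp [hp hsz ha]] hk.
have /is_permP [hu _ hb] := hp.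
have hsk : nth 0 s k < size (leaves d Tm) by rewrite hlm; apply/hb/mem_nth.
have hkp : k < size (leaves d Tp) by rewrite hlp.
have [hwp' elp] := addCaret_wf_leaves hwp hkp.
have [_ elm] := addCaret_wf_leaves hwm hsk.
have hkf : k < size fs by rewrite hsz.
have hsz' : size (leaves d (addCaret d k Tp)) = size s + d.-1.
  by rewrite size_leaves_addCaret ?hlp.
rewrite /Phi /=; apply: (eq_on_leaves hwp) => i eta hi; rewrite homeo_bcat //.
have hi' : i < size s by rewrite -hlp.
case: (eqVneq i k) => [-> | hik].
- rewrite -[in LHS](bcons_btail eta) -bcat_rcons.
  have -> : rcons (nth [::] (leaves d Tp) k) (eta 0) =
            nth [::] (leaves d (addCaret d k Tp)) (k + eta 0).
    by rewrite elp nth_splice_enum_block.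
  rewrite homeo_bcat // ?hsz'; last by have := ltn_ord (eta 0); lia.
  rewrite nth_clone_perm_block // nth_clone_maps_block // elm nth_splice_enum_block //.
  by rewrite bcat_rcons (bact_cons _ (ha k hk)).
- have hne : nth 0 s i != nth 0 s k by rewrite nth_uniq.
  have -> : nth [::] (leaves d Tp) i =
            nth [::] (leaves d (addCaret d k Tp)) (shift_past k d.-1 i).
    by rewrite elp nth_splice_enum_shift.
  rewrite homeo_bcat // ?hsz'; last by rewrite /shift_past; case: ifP; lia.
  rewrite nth_clone_perm_shift // nth_clone_maps_shift // elm.
  by rewrite nth_splice_enum_shift.
Qed.

Lemma valid_expand_aut d (x : triple d) k : 0 < d -> valid x -> k < size (sg x) ->
  valid (expand k x).
Proof. by move=> hd; apply: valid_expand => // f y; apply: section_aut. Qed.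

Lemma equivT_valid d (x y : triple d) : 0 < d -> equivT x y -> valid x <-> valid y.
Proof.
move=> hd; elim=> {x y} [x y [hv [k [hk ->]]] | // | x y _ [] // | x y z _ [h1 h2] _ [h3 h4]].
  by split=> // _; apply: valid_expand_aut.
by split=> [/h1/h3 | /h4/h2].
Qed.

Lemma equivT_Phi d (x y : triple d) : 0 < d -> equivT x y -> Phi x = Phi y.
Proof.
move=> hd; elim=> {x y} [x y [hv [k [hk ->]]] | // | x y _ -> // | x y z _ -> _ -> //].
by rewrite Phi_expand.
Qed.

Lemma valid_mult d (P : aut d -> Prop) (x y : triple d) :
  (forall f g, P f -> P g -> P (f \o g)) ->
  valid_with P x -> valid_with P y -> tp x = tm y -> valid_with P (mult x y).
Proof.
case: x y => Tm1 s1 fs1 Tp1 [Tm2 s2 fs2 Tp2] hPc.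
move=> [/= hwm1 hwp1 hlm1 hlp1 [hp1 hsz1 hP1]] [/= hwm2 hwp2 hlm2 hlp2 [hp2 hsz2 hP2]] e.
subst Tp1; have hn : size s1 = size s2 by rewrite -hlp1 hlm2.
have /is_permP [hu1 _ hb1] := hp1; have /is_permP [hu2 _ hb2] := hp2.
have hs2 i : i < size s2 -> nth 0 s2 i < size s2 by move=> hi; apply/hb2/mem_nth.
split; rewrite /= ?size_mkseq ?hlm1 ?hn //; split; rewrite ?size_mkseq //.
- apply/is_permP; split; rewrite ?size_mkseq //.
    apply/mkseq_uniqP => i j; rewrite !inE => hi hj e; apply/eqP.
    rewrite -(nth_uniq 0 hi hj hu2) -(nth_uniq 0 _ _ hu1) ?e // hn hs2 //.
  move=> z /mapP [i]; rewrite mem_iota add0n => /andP [_ hi] ->.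
  by rewrite -hn; apply/hb1/mem_nth; rewrite hn hs2.
- by move=> i hi; rewrite nth_mkseq //; apply: hPc; [apply: hP1; rewrite hn hs2 | apply: hP2].
Qed.

Lemma Phi_mult d (x y : triple d) : valid x -> valid y -> tp x = tm y ->
  Phi (mult x y) = Phi x \o Phi y.
Proof.
case: x y => Tm1 s1 fs1 Tp1 [Tm2 s2 fs2 Tp2].
move=> [/= hwm1 hwp1 hlm1 hlp1 [hp1 hsz1 ha1]] [/= hwm2 hwp2 hlm2 hlp2 [hp2 hsz2 ha2]] e.
subst Tp1; have /is_permP [_ _ hb2] := hp2.
rewrite /Phi /mult /=; apply: (eq_on_leaves hwp2) => i eta hi.
have hi2 : i < size s2 by rewrite -hlp2.
have ht : nth 0 s2 i < size s2 by apply/hb2/mem_nth.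
rewrite /= !homeo_bcat ?hlm2 // !nth_mkseq // bact_comp //; last exact: ha2.
by apply: ha1; rewrite -hlp1 hlm2.
Qed.

Lemma bcat_bact_word_inj d (a b : seq 'I_d) (f g : aut d) : 1 < d -> is_aut f -> is_aut g ->
  (forall eta, bcat a (bact f eta) = bcat b (bact g eta)) -> a = b.
Proof.
move=> hd; wlog hab : a b f g / size a <= size b.
  move=> W hf hg H; case: (leqP (size a) (size b)) => h; first exact: (W a b f g).
  by apply/esym/(W b a g f (ltnW h) hg hf) => eta; rewrite H.
move=> hf hg H.
have hd0 : 0 < d by lia.
case: (ltnP (size a) (size b)) => hlt; last first.
  have := congr1 (fun e => mkseq e (size a)) (H (fun=> Ordinal hd0)).
  by rewrite !mkseq_bcat ?take_size ?take_oversize.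
(* The letter right after [a] is free on the left but fixed on the right. *)
set c := nth (Ordinal hd0) b (size a).
have [c' hc] : exists c' : 'I_d, c' != c.
  case: (eqVneq c (Ordinal hd0)) => [e|ne]; last by exists (Ordinal hd0); rewrite eq_sym.
  by exists (Ordinal hd); rewrite e; apply/eqP => /(congr1 val).
have [x hx] := rho_surj c' hf.
have := congr1 (fun e => e (size a)) (H (fun=> x)).
rewrite /bcat nth_default // subnn /bact /= aut_single // hx => /= e.
by move: hc; rewrite e (set_nth_default (Ordinal hd0)) // eqxx.
Qed.

Lemma bact_inj d (f g : aut d) : 0 < d -> is_aut f -> is_aut g ->
  (forall eta, bact f eta = bact g eta) -> f = g.
Proof.
move=> hd hf hg H; apply: functional_extensionality => w.
by rewrite -(bact_bcat w (fun=> Ordinal hd) hf) -(bact_bcat w (fun=> Ordinal hd) hg) H.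
Qed.

Lemma leaves_perm_inj d T1 T2 n s1 s2 : 0 < d -> wf_tree d T1 -> wf_tree d T2 ->
  size (leaves d T1) = n -> size (leaves d T2) = n -> is_perm n s1 -> is_perm n s2 ->
  (forall i, i < n -> nth [::] (leaves d T1) (nth 0 s1 i) = nth [::] (leaves d T2) (nth 0 s2 i)) ->
  T1 = T2 /\ s1 = s2.
Proof.
move=> hd hw1 hw2 hl1 hl2 hp1 hp2 H.
have /is_permP [hu1 hs1 hb1] := hp1; have /is_permP [_ hs2 hb2] := hp2.
have hu1' := uniq_leaves hd hw1; have hu2' := uniq_leaves hd hw2.
have sub : {subset leaves d T1 <= leaves d T2}.
  move=> w hw; have hj : index w (leaves d T1) \in s1.
    by rewrite (perm_mem hp1) mem_iota -hl1 index_mem.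
  have hi : index (index w (leaves d T1)) s1 < n by rewrite -hs1 index_mem.
  rewrite -(nth_index [::] hw) -(nth_index 0 hj) H //.
  by apply: mem_nth; rewrite hl2; apply/hb2/mem_nth; rewrite hs2.
have [_ eqi] := uniq_min_size hu1' sub (eq_leq (etrans hl2 (esym hl1))).
have eT := leaves_inj hw1 hw2 (uniq_perm hu1' hu2' eqi); subst T2; split => //.
apply: (@eq_from_nth _ 0) => [|i hi]; first by rewrite hs1 hs2.
have hs1i : nth 0 s1 i < n by apply/hb1/mem_nth.
have hs2i : nth 0 s2 i < n by apply/hb2/mem_nth; rewrite hs2 -hs1.
by apply/eqP; rewrite -(nth_uniq [::] _ _ hu1') ?H ?hl1 // -hs1.
Qed.

Lemma Phi_inj_same_tp d (x y : triple d) : 1 < d -> valid x -> valid y -> tp x = tp y ->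
  Phi x = Phi y -> x = y.
Proof.
case: x y => Tm1 s1 fs1 Tp [Tm2 s2 fs2 Tp2] hd.
move=> + + /= eTp; rewrite -{}eTp.
move=> [/= hwm1 hwp hlm1 hlp1 [hp1 hsz1 ha1]] [/= hwm2 _ hlm2 hlp2 [hp2 hsz2 ha2]].
rewrite /Phi /= => H; have hd0 : 0 < d by lia.
have hn : size s2 = size s1 by rewrite -hlp2 hlp1.
rewrite hn in hlm2 hp2 ha2 hsz2.
have hE i eta : i < size s1 ->
    bcat (nth [::] (leaves d Tm1) (nth 0 s1 i)) (bact (nth id fs1 i) eta) =
    bcat (nth [::] (leaves d Tm2) (nth 0 s2 i)) (bact (nth id fs2 i) eta).
  by move=> hi; rewrite -(@homeo_bcat d Tm1 s1 fs1 Tp) ?hlp1 // H homeo_bcat ?hlp1.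
have hu i : i < size s1 ->
    nth [::] (leaves d Tm1) (nth 0 s1 i) = nth [::] (leaves d Tm2) (nth 0 s2 i).
  by move=> hi; apply: (bcat_bact_word_inj hd (ha1 i hi) (ha2 i hi)) => eta; apply: hE.
have [eT es] := leaves_perm_inj hd0 hwm1 hwm2 hlm1 hlm2 hp1 hp2 hu; subst Tm2 s2.
congr Triple; apply: (@eq_from_nth _ id) => [|i]; rewrite ?hsz1 ?hsz2 // => hi.
apply: (bact_inj hd0 (ha1 i hi) (ha2 i hi)) => eta.
exact: bcat_inj (hE i eta hi).
Qed.

Lemma Phi_inj d (x y : triple d) : 1 < d -> valid x -> valid y -> Phi x = Phi y -> equivT x y.
Proof.
move=> hd hx hy H; have hd0 : 0 < d by lia.
have hs f z : is_aut f -> @is_aut d (section f z) by apply: section_aut.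
have [_ hw1 _ _ _] := hx; have [_ hw2 _ _ _] := hy.
have [R [r1 r2]] := common_refinement hw1 hw2.
have [x' [e1 v1 t1]] := refine_tp hd0 (fun f h => h) hs hx r1.
have [y' [e2 v2 t2]] := refine_tp hd0 (fun f h => h) hs hy r2.
have exy : x' = y'.
  apply: Phi_inj_same_tp => //; first by rewrite t1 t2.
  by rewrite -(equivT_Phi hd0 e1) -(equivT_Phi hd0 e2).
by subst y'; apply: rst_trans e1 _; apply: rst_sym.
Qed.

Lemma homeo_id d T s (fs : seq (aut d)) : wf_tree d T ->
  (forall i, i < size (leaves d T) -> nth 0 s i = i /\ nth id fs i =1 id) ->
  homeo T s fs T = id.
Proof.
move=> hw H; apply: (eq_on_leaves hw) => i eta hi.
by rewrite homeo_bcat //; have [-> hf] := H i hi; rewrite bact_id.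
Qed.

Lemma valid_unit d (P : aut d -> Prop) : P id -> valid_with P (unitT d).
Proof. by move=> h; split => //; split => // -[]. Qed.

Lemma Phi_unit d : Phi (unitT d) = id.
Proof. by apply: homeo_id => // -[]. Qed.

Lemma inverse_exists d (G : aut d -> Prop) (x : triple d) :
  subgroup_aut G -> valid_with G x ->
  exists y, [/\ valid_with G y, tp x = tm y & Phi (mult x y) = id].
Proof.
case: x => Tm s fs Tp [_ _ _ hGv] [/= hwm hwp hlm hlp [hp hsz hP]].
set n := size s in hlm hlp hsz hP hp *.
have /is_permP [hu _ hb] := hp.
have hin i : i < n -> i \in s by rewrite (perm_mem hp) mem_iota.
have hix i : i < n -> index i s < n by move/hin; rewrite index_mem.
have H i : i < n -> exists h, G h /\ nth id fs (index i s) \o h =1 id.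
  by move=> hi; have [h [h1 h2 _]] := hGv _ (hP _ (hix i hi)); exists h.
have [gs hgs hG] := exists_seq id H.
exists (Triple Tp (mkseq (index^~ s) n) gs Tm); split=> //.
- split=> //=; rewrite ?size_mkseq //; split; rewrite ?size_mkseq //; last first.
    by move=> i /hG [].
  apply/is_permP; split; rewrite ?size_mkseq //.
    apply/mkseq_uniqP => i j; rewrite !inE => hi hj e.
    by rewrite -(nth_index 0 (hin i hi)) e nth_index // hin.
  by move=> y /mapP [i]; rewrite mem_iota => /andP [_ hi] ->; apply: hix.
- rewrite /Phi /mult /=; apply: homeo_id => // i; rewrite hlm => hi.
  rewrite size_mkseq !nth_mkseq // nth_index ?hin //; split => // w.
  by have [_ /(_ w)] := hG i hi.
Qed.

Lemma equivT_mult d (x1 y1 x2 y2 : triple d) : 1 < d ->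
  valid x1 -> valid y1 -> valid x2 -> valid y2 -> tp x1 = tm y1 -> tp x2 = tm y2 ->
  equivT x1 x2 -> equivT y1 y2 -> equivT (mult x1 y1) (mult x2 y2).
Proof.
move=> hd hx1 hy1 hx2 hy2 e1 e2 ex ey; have hd0 : 0 < d by lia.
have hAc f g : is_aut f -> @is_aut d g -> is_aut (f \o g) by apply: aut_comp.
apply: Phi_inj => //; try exact: valid_mult.
by rewrite !Phi_mult // (equivT_Phi hd0 ex) (equivT_Phi hd0 ey).
Qed.

Lemma mult_class_rep d (G : aut d -> Prop) (x y x' y' : triple d) : 1 < d ->
  subgroup_aut G -> self_similar G -> valid_with G x -> valid_with G y ->
  equivT x x' -> equivT y y' -> tp x' = tm y' ->
  exists z, valid_with G z /\ equivT z (mult x' y').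
Proof.
move=> hd [hGa _ hGc _] hGs hx hy ex ey e; have hd0 : 0 < d by lia.
have toAut z : valid_with G z -> valid z by apply: valid_with_sub.
have [x1 [y1 [e1 e2 v1 v2 t1]]] := composable_equivT hd0 hGa hGs hx hy.
exists (mult x1 y1); split; first exact: valid_mult.
have vx' : valid x' by apply/(equivT_valid hd0 ex)/toAut.
have vy' : valid y' by apply/(equivT_valid hd0 ey)/toAut.
apply: equivT_mult => //; try exact: toAut.
  by apply: rst_trans ex; apply: rst_sym.
by apply: rst_trans ey; apply: rst_sym.
Qed.

Lemma Vd_Phi d (G : aut d -> Prop) h :
  Vd G h <-> exists x : triple d, valid_with G x /\ Phi x = h.
Proof.
split; first by move=> [Tm [Tp [s [fs [hv ->]]]]]; exists (Triple Tm s fs Tp).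
by move=> [[Tm s fs Tp] [hv <-]]; exists Tm, Tp, s, fs.
Qed.

Unset Implicit Arguments.

Theorem mainTheorem2 (d : nat) (hd : 1 < d) (G : aut d -> Prop)
    (HG : subgroup_aut G) (Hss : self_similar G) :
  (forall (n : nat) (s : seq nat) (f : seq (aut d)) (k : nat),
      in_wr G n s f -> k < n ->
      in_wr G (n + d.-1) (clone_perm k s f) (clone_maps k f)) /\
  (valid_with G (unitT d) /\
   (forall x y : triple d, valid x -> valid y ->
      exists x' y', [/\ equivT x x', equivT y y' & tp x' = tm y']) /\
   (forall x y x' y' : triple d, valid_with G x -> valid_with G y ->
      equivT x x' -> equivT y y' -> tp x' = tm y' ->
      exists z, valid_with G z /\ equivT z (mult x' y')) /\
   (forall x : triple d, valid_with G x ->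
      exists y x' y', [/\ valid_with G y, equivT x x', equivT y y',
                          tp x' = tm y' & equivT (mult x' y') (unitT d)])) /\
  ((forall x y : triple d, equivT x y -> Phi x = Phi y) /\
   (forall x y : triple d, valid x -> valid y -> tp x = tm y ->
      Phi (mult x y) = Phi x \o Phi y) /\
   (forall x y : triple d, valid_with G x -> valid_with G y ->
      Phi x = Phi y -> equivT x y) /\
   (forall h, Vd G h <-> exists x : triple d, valid_with G x /\ Phi x = h)).
Proof.
have hd0 : 0 < d by lia.
have [hGa hGid _ _] := HG.
have hAs f x : @is_aut d f -> is_aut (section f x) by apply: section_aut.
have toAut x : valid_with G x -> valid x by apply: valid_with_sub.
split; first by move=> n s f k; apply: clone_in_wr.
split; [split; [exact: valid_unit hGid | split; [|split]] | split; [|split; [|split]]].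
- move=> x y hx hy.
  have [x' [y' [? ? _ _ ?]]] := composable_equivT hd0 (fun f h => h) hAs hx hy.
  by exists x', y'.
- by move=> x y x' y'; apply: mult_class_rep.
- move=> x hx; have [y [hy e hP]] := inverse_exists HG hx.
  exists y, x, y; split => //; try apply: rst_refl.
  apply: Phi_inj => //; last by rewrite hP Phi_unit.
    exact: valid_mult (@aut_comp d) (toAut _ hx) (toAut _ hy) e.
  exact/valid_unit/aut_id.
- by move=> x y; apply: equivT_Phi.
- exact: Phi_mult.
- by move=> x y hx hy; apply: Phi_inj => //; apply: toAut.
- exact: Vd_Phi.
Qed.
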